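(* Let $\mathbf S=\langle S,\wedge,1\rangle$ be a meet semilattice with top element $1$, and let $\operatorname{Sub}\mathbf S$ denote the lattice of subsemilattices of $\mathbf S$ containing $1$. (a) If $\varepsilon$ is a distributive quasi-order on $\mathbf S$, then $\operatorname{Sub}(\mathbf S,\varepsilon)$, the lattice of all $\varepsilon$-closed subsemilattices containing $1$, is a complete sublattice of $\operatorname{Sub}\mathbf S$. (b) Conversely, let $\mathbf T$ be a complete sublattice of $\operatorname{Sub}\mathbf S$, and define $c\,\rho\,d$ iff for all $X\in\mathbf T$, $c\in X$ implies $d\in X$. Then $\rho$ is a distributive quasi-order, $\mathbf T$ consists precisely of the $\rho$-closed members of $\operatorname{Sub}\mathbf S$, and $\rho$ satisfies (3) if $c\,\rho\,d_1$ and $c\,\rho\,d_2$ then $c\,\rho\,d_1\wedge d_2$; and (4) $c\,\rho\,1$ for all $c\in S$. (c) The correspondence between complete sublattices of $\operatorname{Sub}\mathbf S$ and distributive quasi-orders satisfying (3) and (4) is a dual isomorphism.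
   Context: A quasi-order $\varepsilon$ on $\mathbf S$ is distributive if (1) whenever $c_1\wedge c_2\,\varepsilon\,d$ there exist $d_1,d_2$ with $c_i\,\varepsilon\,d_i$ ($i=1,2$) and $d=d_1\wedge d_2$, and (2) $1\,\varepsilon\,d$ implies $d=1$. A subset $X$ is $\varepsilon$-closed if $c\in X$ and $c\,\varepsilon\,d$ imply $d\in X$. A complete sublattice is a subset closed under arbitrary meets and joins computed in $\operatorname{Sub}\mathbf S$. Quasi-orders are ordered by inclusion. *)

From HB Require Import structures.
From mathcomp Require Import all_boot all_order.
From mathcomp Require Import classical_sets.
Set Implicit Arguments. Unset Strict Implicit. Unset Printing Implicit Defensive.

Local Open Scope classical_set_scope.

Section Defs.
Context {disp : Order.disp_t} {S : tMeetSemilatticeType disp}.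

Definition is_sub (X : set S) : Prop :=
  X Order.top /\ forall x y, X x -> X y -> X (Order.meet x y).

Definition SubS : set (set S) := [set X | is_sub X].

Definition subMeet (F : set (set S)) : set S := \bigcap_(X in F) X.

Definition subJoin (F : set (set S)) : set S :=
  \bigcap_(Y in [set Y | is_sub Y /\ (\bigcup_(X in F) X) `<=` Y]) Y.

Definition complete_sublattice (T : set (set S)) : Prop :=
  T `<=` SubS /\
  forall F : set (set S), F `<=` T -> T (subMeet F) /\ T (subJoin F).

Definition quasi_order (e : S -> S -> Prop) : Prop :=
  (forall c, e c c) /\ (forall c d f, e c d -> e d f -> e c f).

Definition distributive (e : S -> S -> Prop) : Prop :=
  (forall c1 c2 d, e (Order.meet c1 c2) d ->
     exists d1 d2, e c1 d1 /\ e c2 d2 /\ d = Order.meet d1 d2) /\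
  (forall d, e Order.top d -> d = Order.top).

Definition distributive_quasi_order (e : S -> S -> Prop) : Prop :=
  quasi_order e /\ distributive e.

Definition cond3 (e : S -> S -> Prop) : Prop :=
  forall c d1 d2, e c d1 -> e c d2 -> e c (Order.meet d1 d2).
Definition cond4 (e : S -> S -> Prop) : Prop :=
  forall c, e c Order.top.

Definition eps_closed (e : S -> S -> Prop) (X : set S) : Prop :=
  forall c d, X c -> e c d -> X d.

Definition SubEps (e : S -> S -> Prop) : set (set S) :=
  [set X | is_sub X /\ eps_closed e X].

Definition rho_of (T : set (set S)) (c d : S) : Prop :=
  forall X, T X -> X c -> X d.

End Defs.

From HB Require Import structures.
From mathcomp Require Import all_boot all_order.
From mathcomp Require Import classical_sets.
Local Open Scope classical_set_scope.

(* (a) For the subsemilattice J generated by a family of e-closed members,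
   distributivity makes the set of elements all of whose e-successors lie in J a
   subsemilattice containing the union, hence containing J.
   (b) For c in S let <c>_T be the least member of T containing c; then
   rho relates c to d exactly when d lies in <c>_T.  The join in Sub S of
   <c1>_T and <c2>_T consists of meets a /\ b with a in <c1>_T and b in <c2>_T,
   which yields distributivity of rho, and every rho-closed X in Sub S is the
   join of the <c>_T with c in X, hence belongs to T.
   (c) Under (3) and (4) the e-successors of c form the least e-closed member
   of Sub S containing c, so e is recovered from Sub(S, e). *)

Import Order.LTheory.

Section SubLattice.
Context {disp : Order.disp_t} {S : tMeetSemilatticeType disp}.
Implicit Types (X Y : set S) (F T : set (set S)) (e : S -> S -> Prop).

Lemma subMeet_is_sub F : F `<=` SubS -> is_sub (subMeet F).
Proof.
move=> FS; split=> [X /FS [] //|x y Fx Fy X FX].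
by have [_ meetX] := FS X FX; apply: meetX; [exact: Fx | exact: Fy].
Qed.

Lemma subJoin_is_sub F : is_sub (subJoin F).
Proof.
split=> [Y [[]] //|x y Jx Jy Y FY].
by have [[_ meetY] _] := FY; apply: meetY; [exact: Jx | exact: Jy].
Qed.

Lemma subJoin_ub F X : F X -> X `<=` subJoin F.
Proof. by move=> FX x Xx Y [_ FY]; apply: FY; exists X. Qed.

Lemma subJoin_least F Y : is_sub Y -> (forall X, F X -> X `<=` Y) ->
  subJoin F `<=` Y.
Proof. by move=> sY FY x Jx; apply: Jx; split=> // z [X FX Xz]; exact: FY FX z Xz. Qed.

Lemma subJoin0 : subJoin (set0 : set (set S)) `<=` [set Order.top].
Proof.
by apply: subJoin_least=> //; split=> // x y -> ->; rewrite meetxx.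
Qed.

Lemma subJoin2_meets {X1 X2} : is_sub X1 -> is_sub X2 ->
  subJoin [set X1; X2] `<=`
  [set z | exists a b, X1 a /\ X2 b /\ z = Order.meet a b].
Proof.
move=> [top1 meet1] [top2 meet2]; apply: subJoin_least.
  split; first by exists Order.top, Order.top; rewrite meetxx.
  move=> _ _ [a [b [X1a [X2b ->]]]] [a' [b' [X1a' [X2b' ->]]]].
  exists (Order.meet a a'), (Order.meet b b'); do ![split]; [exact: meet1 | exact: meet2 |].
  by rewrite meetACA.
move=> X [->|->] x Xx; first by exists x, Order.top; rewrite meetx1.
by exists Order.top, x; rewrite meet1x.
Qed.

Lemma SubEps_subMeet e F : F `<=` SubEps e -> SubEps e (subMeet F).
Proof.
move=> Fe; split; first by apply: subMeet_is_sub=> X /Fe [].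
by move=> c d Fc cd X FX; have [_ closedX] := Fe X FX; exact: closedX (Fc X FX) cd.
Qed.

Lemma SubEps_subJoin e F : distributive e -> F `<=` SubEps e ->
  SubEps e (subJoin F).
Proof.
move=> [e_meet e_top] Fe; split; first exact: subJoin_is_sub.
have [J_top J_meet] := subJoin_is_sub F.
pose K := [set c | forall d, e c d -> subJoin F d].
have sK : is_sub K.
  split=> [d /e_top -> //|x y Kx Ky d /e_meet [d1 [d2 [xd1 [yd2 ->]]]]].
  exact: J_meet (Kx _ xd1) (Ky _ yd2).
have JK : subJoin F `<=` K.
  apply: subJoin_least=> // X FX x Xx d xd.
  have [_ closedX] := Fe X FX; exact: subJoin_ub _ _ FX _ (closedX _ _ Xx xd).
by move=> c d Jc cd; exact: JK c Jc d cd.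
Qed.

Lemma SubEps_complete_sublattice e : distributive e ->
  complete_sublattice (SubEps e).
Proof.
move=> e_distr; split=> [X [] //|F Fe].
by split; [exact: SubEps_subMeet | exact: SubEps_subJoin].
Qed.

Definition principal T (c : S) : set S := subMeet [set X | T X /\ X c].

Lemma principal_in {T} c : complete_sublattice T -> T (principal T c).
Proof. by move=> [_ T_complete]; case: (T_complete [set X | T X /\ X c])=> // X []. Qed.

Lemma principal_self T c : principal T c c.
Proof. by move=> X []. Qed.

Lemma rho_ofE {T} : complete_sublattice T ->
  forall c d, rho_of T c d <-> principal T c d.
Proof.
move=> T_cl c d; split=> [cd | cd X TX Xc]; last exact: cd.
exact: cd (principal_in c T_cl) (principal_self T c).
Qed.

Lemma rho_of_quasi_order T : quasi_order (rho_of T).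
Proof. by split=> [c X //|c d f cd df X TX Xc]; exact: df X TX (cd X TX Xc). Qed.

Lemma rho_of_cond3 T : T `<=` SubS -> cond3 (rho_of T).
Proof.
move=> TS c d1 d2 cd1 cd2 X TX Xc.
by have [_ meetX] := TS X TX; apply: meetX; [exact: cd1 | exact: cd2].
Qed.

Lemma rho_of_cond4 T : T `<=` SubS -> cond4 (rho_of T).
Proof. by move=> TS c X /TS []. Qed.

Lemma rho_of_distributive T : complete_sublattice T -> distributive (rho_of T).
Proof.
move=> T_cl; have [TS T_complete] := T_cl.
split=> [c1 c2 d /(rho_ofE T_cl) c12d | d topd].
  pose P1 := principal T c1; pose P2 := principal T c2.
  have P12T : [set P1; P2] `<=` T by move=> Y [->|->]; exact: principal_in.
  have JP12 : subJoin [set P1; P2] d.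
    apply: c12d; split; first exact: (T_complete _ P12T).2.
    have [_ J_meet] := subJoin_is_sub [set P1; P2].
    by apply: J_meet; apply: subJoin_ub (principal_self _ _); [left | right].
  have [a [b [P1a [P2b ->]]]] :=
    subJoin2_meets (TS _ (principal_in c1 T_cl)) (TS _ (principal_in c2 T_cl)) d JP12.
  by exists a, b; rewrite !(rho_ofE T_cl).
have T0 : T (subJoin set0) := (T_complete set0 (sub0set T)).2.
exact: subJoin0 (topd _ T0 (subJoin_is_sub set0).1).
Qed.

Lemma SubEps_rho_of {T} : complete_sublattice T -> SubEps (rho_of T) = T.
Proof.
move=> T_cl; have [TS T_complete] := T_cl.
apply/seteqP; split=> [X [sX closedX] | X TX]; last first.
  by split=> [|c d Xc cd]; [exact: TS | exact: cd X TX Xc].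
pose F := [set Y | exists2 c, X c & Y = principal T c].
have FT : F `<=` T by move=> Y [c _ ->]; exact: principal_in.
suff -> : X = subJoin F by exact: (T_complete F FT).2.
apply/seteqP; split=> [x Xx | ].
  by apply: (@subJoin_ub _ (principal T x)); [exists x | exact: principal_self].
apply: subJoin_least=> // Y [c Xc ->] y cy.
by apply: (closedX c)=> //; apply/(rho_ofE T_cl).
Qed.

Lemma rho_of_SubEps e : quasi_order e -> cond3 e -> cond4 e ->
  forall c d, rho_of (SubEps e) c d <-> e c d.
Proof.
move=> [e_refl e_trans] e3 e4 c d; split=> [cd | cd X [_ closedX] Xc].
  apply: (cd [set z | e c z])=> //=; split; first by split=> // x y; exact: e3.
  by move=> x y cx xy; exact: e_trans cx xy.
exact: closedX Xc cd.
Qed.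

Lemma SubEps_antitone e1 e2 : (forall c d, e1 c d -> e2 c d) ->
  SubEps e2 `<=` SubEps e1.
Proof. by move=> e12 X [sX closedX]; split=> // c d Xc /e12; exact: closedX. Qed.

Lemma rho_of_antitone T1 T2 : T1 `<=` T2 ->
  forall c d, rho_of T2 c d -> rho_of T1 c d.
Proof. by move=> T12 c d cd X /T12; exact: cd. Qed.

End SubLattice.

Theorem theorem8p1 (disp : Order.disp_t) (S : tMeetSemilatticeType disp) :
  (* (a) *)
  (forall e : S -> S -> Prop, distributive_quasi_order e ->
     complete_sublattice (SubEps e)) /\
  (* (b) *)
  (forall T : set (set S), complete_sublattice T ->
     [/\ distributive_quasi_order (rho_of T),
         T = [set X | SubS X /\ eps_closed (rho_of T) X],
         cond3 (rho_of T) & cond4 (rho_of T)]) /\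
  (* (c) the correspondence T |-> rho_of T, e |-> SubEps e is a dual
     isomorphism between complete sublattices of Sub S and distributive
     quasi-orders satisfying (3) and (4) *)
  [/\ (forall e : S -> S -> Prop,
         [/\ distributive_quasi_order e, cond3 e & cond4 e] ->
         forall c d, rho_of (SubEps e) c d <-> e c d),
      (forall T : set (set S), complete_sublattice T -> SubEps (rho_of T) = T),
      (forall e1 e2 : S -> S -> Prop,
         [/\ distributive_quasi_order e1, cond3 e1 & cond4 e1] ->
         [/\ distributive_quasi_order e2, cond3 e2 & cond4 e2] ->
         ((forall c d, e1 c d -> e2 c d) <-> SubEps e2 `<=` SubEps e1))
    & (forall T1 T2 : set (set S),
         complete_sublattice T1 -> complete_sublattice T2 ->
         (T1 `<=` T2 <-> (forall c d, rho_of T2 c d -> rho_of T1 c d)))].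
Proof.
have rho_SubEps (e : S -> S -> Prop) : [/\ distributive_quasi_order e, cond3 e & cond4 e] ->
    forall c d, rho_of (SubEps e) c d <-> e c d.
  by move=> [[e_qo _] e3 e4]; exact: rho_of_SubEps.
split; first by move=> e [_]; exact: SubEps_complete_sublattice.
split.
  move=> T T_cl; have TS := T_cl.1.
  split; [split | | exact: rho_of_cond3 | exact: rho_of_cond4].
  - exact: rho_of_quasi_order.
  - exact: rho_of_distributive.
  - by rewrite -[LHS](SubEps_rho_of T_cl).
split=> [//|T /SubEps_rho_of //|e1 e2 e1P e2P|T1 T2 T1_cl T2_cl].
  split=> [|e21 c d /(rho_SubEps _ e1P) cd]; first exact: SubEps_antitone.
  by apply/(rho_SubEps _ e2P); exact: rho_of_antitone e21 c d cd.
split=> [|rho21]; first exact: rho_of_antitone.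
by rewrite -(SubEps_rho_of T1_cl) -(SubEps_rho_of T2_cl); exact: SubEps_antitone.
Qed.
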